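(* Let $\mathcal{L}:\mathbb{R}^p\to\mathbb{R}$ be continuously differentiable, let $\theta_0\in\mathbb{R}^p$, and let $\mathcal{B}(\theta_0)\subseteq\mathbb{R}^p$ be a non-empty set containing $\theta_0$. Let $(\theta_t)_{t\ge0}$ be generated by gradient descent $\theta_{t+1}=\theta_t-\eta_t\nabla_\theta\mathcal{L}(\theta_t)$ with all iterates $\theta_t$, $t\ge1$, in $\mathcal{B}(\theta_0)$. Fix $t$ and suppose: (RSC condition) there is a non-empty set $\mathcal{N}_t$ such that (a) $\mathcal{N}_t\subseteq\mathcal{B}(\theta_0)$; (b) either (b.1) $\theta_{t+1}\in\mathcal{N}_t$ and either $\theta_t\notin\mathcal{N}_t$ or $\mathcal{L}(\theta_t)\ne\inf_{\theta\in\mathcal{N}_t}\mathcal{L}(\theta)$, or (b.2) there exists $\theta'\in\mathcal{N}_t$ with $\mathcal{L}(\theta')<\mathcal{L}(\theta_t)$; and (c) $\mathcal{L}$ satisfies $\alpha_t$-RSC with respect to $(\mathcal{N}_t,\theta_t)$ for some $\alpha_t>0$; (Smoothness condition) for some $\beta>0$, $\mathcal{L}(\theta')\le\mathcal{L}(\theta)+\langle\theta'-\theta,\nabla_\theta\mathcal{L}(\theta)\rangle+\frac{\beta}{2}\|\theta'-\theta\|_2^2$ for all $\theta,\theta'\in\mathcal{B}(\theta_0)$. Assume $\alpha_t\le\beta$ and $\eta_t=\omega_t/\beta$ with $\omega_t\in(0,2)$. Then $$\mathcal{L}(\theta_{t+1})-\inf_{\theta\in\mathcal{N}_t}\mathc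al{L}(\theta)\le\Big(1-\frac{\alpha_t\omega_t}{\beta}(2-\omega_t)\Big)\Big(\mathcal{L}(\theta_t)-\inf_{\theta\in\mathcal{N}_t}\mathcal{L}(\theta)\Big).$$
   Context: A function $\mathcal{L}$ satisfies $\alpha$-restricted strong convexity ($\alpha$-RSC) with respect to a tuple $(\mathcal{S},\theta)$, where $\mathcal{S}\subseteq\mathbb{R}^p$ and $\theta\in\mathbb{R}^p$ is fixed, if $\alpha>0$ and for every $\theta'\in\mathcal{S}$: $\mathcal{L}(\theta')\ge\mathcal{L}(\theta)+\langle\theta'-\theta,\nabla_\theta\mathcal{L}(\theta)\rangle+\frac{\alpha}{2}\|\theta'-\theta\|_2^2$. *)

From HB Require Import structures.
From mathcomp Require Import all_boot all_order all_algebra.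
From mathcomp Require Import all_classical all_reals all_analysis.
Set Implicit Arguments. Unset Strict Implicit. Unset Printing Implicit Defensive.
Import Order.TTheory GRing.Theory Num.Theory.
Import numFieldNormedType.Exports.
Local Open Scope classical_set_scope.
Local Open Scope ring_scope.

Definition dotp {R : realType} {p : nat} (u v : 'rV[R]_p) : R :=
  \sum_(i < p) u ord0 i * v ord0 i.

Definition sqnorm2 {R : realType} {p : nat} (u : 'rV[R]_p) : R := dotp u u.

Definition is_gradient {R : realType} {p : nat}
  (L : 'rV[R]_p -> R) (g : 'rV[R]_p -> 'rV[R]_p) : Prop :=
  forall x, differentiable L x /\ forall v, 'd L x v = dotp v (g x).

Definition C1_with_gradient {R : realType} {p : nat}
  (L : 'rV[R]_p -> R) (g : 'rV[R]_p -> 'rV[R]_p) : Prop :=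
  is_gradient L g /\ continuous g.

Definition RSC {R : realType} {p : nat} (L : 'rV[R]_p -> R)
  (g : 'rV[R]_p -> 'rV[R]_p) (alpha : R) (S : set 'rV[R]_p) (theta : 'rV[R]_p) : Prop :=
  0 < alpha /\
  forall theta', S theta' ->
    L theta' >= L theta + dotp (theta' - theta) (g theta)
                 + alpha / 2 * sqnorm2 (theta' - theta).

Definition inf_on {R : realType} {p : nat} (L : 'rV[R]_p -> R) (S : set 'rV[R]_p) : R :=
  inf (L @` S).

(** Smoothness turns the gradient step with [eta = omega / beta] into a
    descent of [omega (2 - omega) / (2 beta) |g|^2], where [g] is the gradient
    at [theta_t].  Minimising the RSC quadratic lower bound over [N] gives the
    Polyak-Lojasiewicz type bound [inf_N L >= L theta_t - |g|^2 / (2 alpha)],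
    i.e. [|g|^2 >= 2 alpha (L theta_t - inf_N L)]; substituting it into the
    descent yields the contraction. *)

From HB Require Import structures.
From mathcomp Require Import all_boot all_order all_algebra.
From mathcomp Require Import all_classical all_reals all_analysis.
From mathcomp Require Import ring lra.
Import Order.TTheory GRing.Theory Num.Theory.
Import numFieldNormedType.Exports.
Local Open Scope classical_set_scope.
Local Open Scope ring_scope.

Section GradientStep.
Context {R : realType} {p : nat}.
Implicit Types (u v w : 'rV[R]_p) (L : 'rV[R]_p -> R) (g : 'rV[R]_p -> 'rV[R]_p).

Lemma dotpZl (a : R) u v : dotp (a *: u) v = a * dotp u v.
Proof. by rewrite /dotp mulr_sumr; apply: eq_bigr => i _; rewrite mxE mulrA. Qed.

Lemma dotpZr (a : R) u v : dotp u (a *: v) = a * dotp u v.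
Proof. by rewrite /dotp mulr_sumr; apply: eq_bigr => i _; rewrite mxE mulrCA. Qed.

Lemma sqnorm2Z (a : R) u : sqnorm2 (a *: u) = a ^+ 2 * sqnorm2 u.
Proof. by rewrite /sqnorm2 dotpZl dotpZr mulrA -expr2. Qed.

Lemma dotp_quad_ge (a : R) v w : 0 < a ->
  - (sqnorm2 w / (2 * a)) <= dotp v w + a / 2 * sqnorm2 v.
Proof.
move=> a_gt0; rewrite -subr_ge0 opprK /sqnorm2 /dotp.
rewrite mulr_sumr mulr_suml -!big_split /=; apply: sumr_ge0 => i _.
set x := v ord0 i; set y := w ord0 i.
have -> : x * y + a / 2 * (x * x) + y * y / (2 * a) = (a * x + y) ^+ 2 / (2 * a).
  by field; rewrite gt_eqF.
by rewrite divr_ge0 ?sqr_ge0 // mulr_ge0 // ltW.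
Qed.

Lemma RSC_inf_on_ge L g (alpha : R) (S : set 'rV[R]_p) theta :
  S !=set0 -> RSC L g alpha S theta ->
  L theta - sqnorm2 (g theta) / (2 * alpha) <= inf_on L S.
Proof.
move=> [x0 Sx0] [alpha_gt0 rsc]; apply: lb_le_inf; first by exists (L x0), x0.
move=> _ [x Sx <-]; apply: le_trans (rsc x Sx); rewrite -addrA lerD2l.
exact: dotp_quad_ge.
Qed.

Lemma smooth_gradient_step_le L g (beta eta : R) theta :
  L (theta - eta *: g theta) <=
    L theta + dotp ((theta - eta *: g theta) - theta) (g theta)
    + beta / 2 * sqnorm2 ((theta - eta *: g theta) - theta) ->
  L (theta - eta *: g theta) <=
    L theta - eta * (1 - beta * eta / 2) * sqnorm2 (g theta).
Proof.
have -> : theta - eta *: g theta - theta = (- eta) *: g theta.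
  by rewrite addrAC subrr add0r scaleNr.
rewrite dotpZl sqnorm2Z -/(sqnorm2 _) => /le_trans; apply.
by rewrite le_eqVlt; apply/orP; left; apply/eqP; ring.
Qed.

End GradientStep.

Lemma PL_descent_contraction (R : realFieldType) (a c G L0 L1 m : R) :
  0 < a -> 0 <= c -> L1 <= L0 - c * G -> L0 - G / (2 * a) <= m ->
  L1 - m <= (1 - 2 * a * c) * (L0 - m).
Proof.
move=> a_gt0 c_ge0 descent inf_ge.
have gap_le : 2 * a * (L0 - m) <= G.
  have : L0 - m <= G / (2 * a) by lra.
  by rewrite ler_pdivlMr ?mulr_gt0 // mulrC.
have := ler_wpM2l c_ge0 gap_le; lra.
Qed.

Theorem lemma2 (R : realType) (p : nat)
  (L : 'rV[R]_p -> R) (g : 'rV[R]_p -> 'rV[R]_p)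
  (B : set 'rV[R]_p) (theta : nat -> 'rV[R]_p) (eta : nat -> R)
  (t : nat) (N : set 'rV[R]_p) (alpha beta omega : R) :
  C1_with_gradient L g ->
  B (theta 0%N) ->
  (forall s : nat, theta s.+1 = theta s - eta s *: g (theta s)) ->
  (forall s : nat, (1 <= s)%N -> B (theta s)) ->
  (* RSC condition *)
  N !=set0 ->
  N `<=` B ->
  ((N (theta t.+1) /\ (~ N (theta t) \/ L (theta t) <> inf_on L N))
   \/ (exists theta', N theta' /\ L theta' < L (theta t))) ->
  RSC L g alpha N (theta t) ->
  (* smoothness condition *)
  0 < beta ->
  (forall th th', B th -> B th' ->
     L th' <= L th + dotp (th' - th) (g th) + beta / 2 * sqnorm2 (th' - th)) ->
  alpha <= beta ->
  0 < omega < 2 ->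
  eta t = omega / beta ->
  L (theta t.+1) - inf_on L N
    <= (1 - alpha * omega / beta * (2 - omega)) * (L (theta t) - inf_on L N).
Proof.
move=> _ B0 step Biter Nne _ _ rsc beta_gt0 smooth _ /andP[omega_gt0 omega_lt2] eta_t.
have Bt : B (theta t) by case: t {step rsc eta_t} => [|s] //; apply: Biter.
have descent : L (theta t.+1) <=
    L (theta t) - eta t * (1 - beta * eta t / 2) * sqnorm2 (g (theta t)).
  rewrite step; apply: smooth_gradient_step_le; rewrite -step.
  exact: smooth (Biter _ (ltn0Sn t)).
rewrite eta_t in descent.
have -> : alpha * omega / beta * (2 - omega)
          = 2 * alpha * (omega / beta * (1 - beta * (omega / beta) / 2)).
  by field; rewrite gt_eqF.
apply: PL_descent_contraction; [by case: rsc | | exact: descent |].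
- rewrite mulrCA divff ?gt_eqF // mulr1.
  apply: mulr_ge0; first by rewrite divr_ge0 // ltW.
  by rewrite subr_ge0 ler_pdivrMr // mul1r ltW.
- by apply: RSC_inf_on_ge.
Qed.
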